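(* For $\alpha=(\alpha_1,\dots,\alpha_r)$ with $1\ge\alpha_1\ge\dots\ge\alpha_r\ge0$ and $\sum_{i=1}^r\alpha_i=1$ (where $r$ may vary), let $H(\alpha)=-\sum_{i=1}^r\alpha_i\log\alpha_i$ and $H'(\alpha)=-\sum_{i=2}^r\alpha_i\log\alpha_i$. Then $$\lim_{\alpha_1\uparrow 1}\frac{H'(\alpha)}{H(\alpha)}=1\qquad\text{and}\qquad\lim_{\alpha_1\downarrow 0}\frac{H'(\alpha)}{H(\alpha)}=1,$$ uniformly over the remaining coordinates.
   Context: $\log$ is the natural logarithm, with the convention $0\log 0=0$. *)

From HB Require Import structures.
From mathcomp Require Import all_boot all_order all_algebra.
From mathcomp Require Import all_classical all_reals all_analysis.
Set Implicit Arguments. Unset Strict Implicit. Unset Printing Implicit Defensive.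
Import Order.TTheory GRing.Theory Num.Theory.
Local Open Scope ring_scope.

Definition xlnx {R : realType} (x : R) : R := if x == 0 then 0 else x * ln x.

(* A probability vector alpha = (a 0, ..., a (r-1)) (so alpha_1 = a 0),
   nonincreasing, nonnegative, summing to 1, with r >= 1. *)
Definition ordered_prob_vec {R : realType} (r : nat) (a : nat -> R) : Prop :=
  [/\ (0 < r)%N,
      (forall i, (i < r)%N -> 0 <= a i),
      (forall i, (i.+1 < r)%N -> a i.+1 <= a i)
    & \sum_(i < r) a i = 1].

Definition entropyH {R : realType} (r : nat) (a : nat -> R) : R :=
  - \sum_(0 <= i < r) xlnx (a i).

Definition entropyH' {R : realType} (r : nat) (a : nat -> R) : R :=
  - \sum_(1 <= i < r) xlnx (a i).

(** With [h = - α₁ log α₁] we have [H = h + H'], so [|H'/H - 1| = h / H].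
    Every [αᵢ] is at most [α₁], hence [H >= - log α₁] and [h / H <= α₁]: this
    handles [α₁ ↓ 0].  Every [αᵢ] with [i >= 2] is at most [c = 1 - α₁], hence
    [H' >= c (- log c)], while [h <= c]; so [h / H <= 1 / (- log c)], which
    handles [α₁ ↑ 1]. *)
From HB Require Import structures.
From mathcomp Require Import all_boot all_order all_algebra.
From mathcomp Require Import all_classical all_reals all_analysis.
From mathcomp Require Import lra.
Import Order.TTheory GRing.Theory Num.Theory.
Local Open Scope ring_scope.

Section xlnx_bounds.
Context {R : realType}.
Implicit Types x c : R.

Lemma Nxlnx_ge x c : 0 <= x -> x <= c -> 0 < c -> x * - ln c <= - xlnx x.
Proof.
move=> x_ge0 x_le_c c_gt0; rewrite /xlnx; have [->|x_neq0] := eqVneq x 0.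
  by rewrite mul0r oppr0.
have x_gt0 : 0 < x by rewrite lt0r x_neq0.
by rewrite mulrN lerN2 ler_wpM2l // ler_ln // posrE.
Qed.

Lemma Nxlnx_ge0 x : 0 <= x <= 1 -> 0 <= - xlnx x.
Proof.
case/andP=> x_ge0 x_le1; have := @Nxlnx_ge x 1 x_ge0 x_le1 ltr01.
by rewrite ln1 oppr0 mulr0.
Qed.

Lemma Nxlnx_le1B x : 0 <= x -> - xlnx x <= 1 - x.
Proof.
rewrite /xlnx le0r => /orP[/eqP->|x_gt0]; first by rewrite eqxx oppr0.
rewrite (negbTE (lt0r_neq0 x_gt0)) -mulrN -lnV ?posrE //.
have : ln x^-1 <= x^-1 - 1.
  have := @le_ln1Dx _ (x^-1 - 1); rewrite [1 + _]addrC subrK; apply.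
  by rewrite ltrBrDl subrr invr_gt0.
move/(ler_wpM2l (ltW x_gt0)); rewrite mulrBr divff ?mulr1 //.
exact: lt0r_neq0.
Qed.

Lemma sum_Nxlnx_ge (I : Type) (s : seq I) (P : pred I) (F : I -> R) c :
  0 < c -> (forall i, P i -> 0 <= F i <= c) ->
  (\sum_(i <- s | P i) F i) * - ln c <= \sum_(i <- s | P i) - xlnx (F i).
Proof.
move=> c_gt0 F_bnd; rewrite mulr_suml; apply: ler_sum => i /F_bnd /andP[? ?].
exact: Nxlnx_ge.
Qed.

End xlnx_bounds.

Lemma ler_sum_nat_term (R : numDomainType) (m n i : nat) (F : nat -> R) :
  (forall j, (m <= j < n)%N -> 0 <= F j) -> (m <= i < n)%N ->
  F i <= \sum_(m <= j < n) F j.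
Proof.
move=> F_ge0 i_in; rewrite (bigD1_seq i) ?mem_index_iota ?iota_uniq //=.
rewrite lerDl big_seq_cond sumr_ge0 // => j /andP[]; rewrite mem_index_iota.
by move=> /F_ge0.
Qed.

Lemma norm_divDr_sub1 (R : numFieldType) (h y : R) :
  0 <= h -> 0 < h + y -> `| y / (h + y) - 1 | = h / (h + y).
Proof.
move=> h_ge0 sum_gt0; have -> : y / (h + y) - 1 = - (h / (h + y)).
  rewrite -[X in _ - X](divff (lt0r_neq0 sum_gt0)) -mulrBl.
  by rewrite opprD addrCA subrr addr0 mulNr.
by rewrite normrN ger0_norm // divr_ge0 // ltW.
Qed.

Lemma entropyH_split (R : realType) (r : nat) (a : nat -> R) : (0 < r)%N ->
  entropyH r a = - xlnx (a 0%N) + entropyH' r a.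
Proof. by move=> r_gt0; rewrite /entropyH /entropyH' big_ltn // opprD. Qed.

Section ordered_prob_vec.
Context {R : realType} {r : nat} {a : nat -> R}.
Hypothesis a_prob : ordered_prob_vec r a.

Let r_gt0 : (0 < r)%N. Proof. by case: a_prob. Qed.
Let a_ge0 i : (i < r)%N -> 0 <= a i. Proof. by case: a_prob => _ + _ _; apply. Qed.

Lemma ordered_prob_vec_le_head i : (i < r)%N -> a i <= a 0%N.
Proof.
case: a_prob => _ _ a_noninc _; elim: i => [//|i IHi] i_lt.
exact: le_trans (a_noninc _ i_lt) (IHi (ltnW i_lt)).
Qed.

Lemma ordered_prob_vec_tail_sum : \sum_(1 <= i < r) a i = 1 - a 0%N.
Proof.
case: a_prob => _ _ _; rewrite -(big_mkord xpredT) big_ltn // => <-.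
by rewrite addrC addKr.
Qed.

Lemma ordered_prob_vec_le_tail_mass i : (1 <= i < r)%N -> a i <= 1 - a 0%N.
Proof.
rewrite -ordered_prob_vec_tail_sum; apply: ler_sum_nat_term => j /andP[_].
exact: a_ge0.
Qed.

Lemma entropyH_ge_Nln_head : 0 < a 0%N -> - ln (a 0%N) <= entropyH r a.
Proof.
move=> a0_gt0; case: a_prob => _ _ _ sum1.
rewrite /entropyH -sumrN -[X in X <= _]mul1r -sum1 -(big_mkord xpredT).
rewrite big_nat_cond [X in _ <= X]big_nat_cond.
apply: sum_Nxlnx_ge => // i /andP[/andP[_ i_lt] _].
by rewrite a_ge0 ?ordered_prob_vec_le_head.
Qed.

Lemma entropyH'_ge_tail_mass : a 0%N < 1 ->
  (1 - a 0%N) * - ln (1 - a 0%N) <= entropyH' r a.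
Proof.
move=> a0_lt1; rewrite /entropyH' -sumrN -[X in X * _]ordered_prob_vec_tail_sum.
rewrite big_nat_cond [X in _ <= X]big_nat_cond.
apply: sum_Nxlnx_ge => [|i /andP[i_in _]]; first by rewrite subr_gt0.
rewrite ordered_prob_vec_le_tail_mass // a_ge0 //.
by case/andP: i_in.
Qed.

Lemma entropy_rel_err : 0 <= a 0%N <= 1 -> 0 < entropyH r a ->
  `| entropyH' r a / entropyH r a - 1 | = - xlnx (a 0%N) / entropyH r a.
Proof.
by move=> a0_in; rewrite entropyH_split //; apply/norm_divDr_sub1/Nxlnx_ge0.
Qed.

Lemma entropy_rel_err_le_head : 0 < a 0%N < 1 ->
  `| entropyH' r a / entropyH r a - 1 | <= a 0%N.
Proof.
move=> /andP[a0_gt0 a0_lt1]; have a0_in : 0 <= a 0%N <= 1 by rewrite !ltW.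
have Nln_gt0 : 0 < - ln (a 0%N) by rewrite oppr_gt0 ln_lt0 // a0_gt0.
have H_ge := entropyH_ge_Nln_head a0_gt0.
have H_gt0 : 0 < entropyH r a := lt_le_trans Nln_gt0 H_ge.
rewrite entropy_rel_err // ler_pdivrMr //.
rewrite /xlnx (negbTE (lt0r_neq0 a0_gt0)) -mulrN.
by rewrite ler_wpM2l // ltW.
Qed.

Lemma entropy_rel_err_le_inv_Nln_tail : 0 < a 0%N < 1 ->
  `| entropyH' r a / entropyH r a - 1 | <= (- ln (1 - a 0%N))^-1.
Proof.
move=> /andP[a0_gt0 a0_lt1]; have a0_in : 0 <= a 0%N <= 1 by rewrite !ltW.
set c := 1 - a 0%N.
have c_gt0 : 0 < c by rewrite subr_gt0.
have Nln_gt0 : 0 < - ln c by rewrite oppr_gt0 ln_lt0 // c_gt0 ltrBlDr ltrDl.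
have h_ge0 : 0 <= - xlnx (a 0%N) by rewrite Nxlnx_ge0.
have H'_ge := entropyH'_ge_tail_mass a0_lt1.
have hL_le : - xlnx (a 0%N) * - ln c <= c * - ln c.
  by apply: ler_wpM2r; [exact: ltW | exact: Nxlnx_le1B (ltW a0_gt0)].
have H'_le_H : entropyH' r a <= entropyH r a by rewrite entropyH_split // lerDr.
have H_gt0 : 0 < entropyH r a.
  by apply: lt_le_trans (le_trans H'_ge H'_le_H); exact: mulr_gt0.
have H_ge := le_trans hL_le (le_trans H'_ge H'_le_H).
by rewrite entropy_rel_err // ler_pdivrMr // mulrC ler_pdivlMr.
Qed.

End ordered_prob_vec.

Theorem lemma1 (R : realType) :
  (forall eps : R, 0 < eps -> exists delta : R, 0 < delta /\
     forall (r : nat) (a : nat -> R), ordered_prob_vec r a ->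
       1 - delta < a 0%N < 1 ->
       `| entropyH' r a / entropyH r a - 1 | < eps) /\
  (forall eps : R, 0 < eps -> exists delta : R, 0 < delta /\
     forall (r : nat) (a : nat -> R), ordered_prob_vec r a ->
       0 < a 0%N < delta ->
       `| entropyH' r a / entropyH r a - 1 | < eps).
Proof.
split=> eps eps_gt0.
- exists (expR (- eps^-1)); split=> [|r a a_prob /andP[a0_gt a0_lt1]].
    exact: expR_gt0.
  have delta_lt1 : expR (- eps^-1) < 1 by rewrite expR_lt1 oppr_lt0 invr_gt0.
  have a0_gt0 : 0 < a 0%N by apply: le_lt_trans a0_gt; rewrite subr_ge0 ltW.
  have a0_in : 0 < a 0%N < 1 by rewrite a0_gt0.
  apply: le_lt_trans (entropy_rel_err_le_inv_Nln_tail a_prob a0_in) _.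
  have c_lt : 1 - a 0%N < expR (- eps^-1) by lra.
  have inv_eps_lt : eps^-1 < - ln (1 - a 0%N).
    by rewrite ltrNr -[X in _ < X]expRK ltr_ln ?posrE ?expR_gt0 ?subr_gt0.
  rewrite -[X in _ < X]invrK ltf_pV2 ?posrE ?invr_gt0 //.
  by apply: lt_trans inv_eps_lt; rewrite invr_gt0.
- exists (Num.min eps 1); split=> [|r a a_prob /andP[a0_gt0]].
    by rewrite lt_min eps_gt0 ltr01.
  rewrite lt_min => /andP[a0_lt_eps a0_lt1].
  apply: le_lt_trans (entropy_rel_err_le_head a_prob _) a0_lt_eps.
  by rewrite a0_gt0.
Qed.
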